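(* Let $m\in\mathbb{N}$ and let $A,B$ be finite (nonempty) sequences of positive integers. If $A$ and $B$ are $m$-palindromes, then the concatenation $ABA$ is an $m$-palindrome.
   Context: For a finite sequence $(c_0,\dots,c_k)$ of positive integers, $[c_0,\dots,c_k]$ denotes the value of the finite continued fraction $c_0+\cfrac{1}{c_1+\cfrac{1}{\ddots+\cfrac{1}{c_k}}}$. A finite sequence $(c_0,\dots,c_k)$ of positive integers is an $m$-palindrome ($m\in\mathbb{N}$) if $[c_0,\dots,c_k]=m\,[c_k,\dots,c_0]$. *)

From mathcomp Require Import all_boot all_order all_algebra.
Set Implicit Arguments. Unset Strict Implicit. Unset Printing Implicit Defensive.
Import Order.TTheory GRing.Theory Num.Theory.
Local Open Scope ring_scope.

(* [c_0, ..., c_k] = c_0 + 1/(c_1 + 1/(... + 1/c_k)).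
   Value on the empty sequence is irrelevant (set to 0); sequences used
   are nonempty. *)
Fixpoint cf (s : seq nat) : rat :=
  match s with
  | [::] => 0
  | [:: c] => c%:R
  | c :: t => c%:R + (cf t)^-1
  end.

Definition pos_seq (s : seq nat) : bool := (s != [::]) && all (fun c => 0 < c)%N s.

Definition m_palindrome (m : nat) (s : seq nat) : Prop :=
  cf s = m%:R * cf (rev s).

From mathcomp Require Import all_boot all_order all_algebra.
From mathcomp Require Import ring.
Set Implicit Arguments. Unset Strict Implicit. Unset Printing Implicit Defensive.
Import Order.TTheory GRing.Theory Num.Theory.

(** Write the continued fraction of c_0, ..., c_k through the matrix product
  M = [[c_0, 1], [1, 0]] ... [[c_k, 1], [1, 0]]: its first column is the
  numerator and denominator of [c_0, ..., c_k], and reversing the sequence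
  transposes M.  Hence, for positive entries, being an m-palindrome says
  exactly that M D is symmetric for D = diag(m, 1), i.e. M D = D M^T.  This
  relation is preserved by X, Y |-> X Y X, as
  X Y X D = X Y D X^T = X D Y^T X^T = D (X Y X)^T. *)

Local Open Scope ring_scope.

Lemma ord2_cases (i : 'I_2) : i = 0 \/ i = 1.
Proof. by case: i => [[|[|//]]] ?; [left | right]; apply: val_inj. Qed.

Section TwistedSymmetry.

Variable R : comPzRingType.

Lemma mulmx_sandwich_twisted_sym n (D X Y : 'M[R]_n) :
  X *m D = D *m X^T -> Y *m D = D *m Y^T ->
  X *m Y *m X *m D = D *m (X *m Y *m X)^T.
Proof.
move=> XD YD; rewrite !trmx_mul -!mulmxA XD !mulmxA -[X *m Y *m D]mulmxA YD.
by rewrite !mulmxA XD.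
Qed.

Definition twist2 (a : R) : 'M[R]_2 := diag_mx (\row_j (if j == 0 then a else 1)).

Lemma twisted_sym2P (a : R) (M : 'M[R]_2) :
  M *m twist2 a = twist2 a *m M^T <-> M 0 1 = a * M 1 0.
Proof.
rewrite mul_mx_diag mul_diag_mx; split=> [/matrixP/(_ 0 1) | M01].
  by rewrite !mxE /= mulr1 mulrC.
apply/matrixP => i j; rewrite !mxE.
case: (ord2_cases i) => ->; case: (ord2_cases j) => -> /=;
  by rewrite ?M01 ?mulr1 ?mul1r // mulrC.
Qed.

End TwistedSymmetry.

Definition digit_mx (c : nat) : 'M[rat]_2 :=
  \matrix_(i, j) if (i == 0) && (j == 0) then c%:R else (i != j)%:R.

Definition cf_mx (s : seq nat) : 'M[rat]_2 := \prod_(c <- s) digit_mx c.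

Lemma trmx_digit c : (digit_mx c)^T = digit_mx c.
Proof. by apply/matrixP => i j; rewrite !mxE andbC (eq_sym j i). Qed.

Lemma cf_mx_cons c s : cf_mx (c :: s) = digit_mx c *m cf_mx s.
Proof. by rewrite /cf_mx big_cons mulmxE. Qed.

Lemma cf_mx_cat s t : cf_mx (s ++ t) = cf_mx s *m cf_mx t.
Proof. by rewrite /cf_mx big_cat mulmxE. Qed.

Lemma cf_mx_rev s : cf_mx (rev s) = (cf_mx s)^T.
Proof.
elim: s => [|c s IH]; first by rewrite /cf_mx big_nil trmx1.
rewrite rev_cons -cats1 cf_mx_cat IH [cf_mx (c :: s)]cf_mx_cons.
by rewrite trmx_mul trmx_digit /cf_mx big_seq1.
Qed.

Lemma cf_mx_cons_col c s :
  cf_mx (c :: s) 0 0 = c%:R * cf_mx s 0 0 + cf_mx s 1 0 /\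
  cf_mx (c :: s) 1 0 = cf_mx s 0 0.
Proof.
rewrite cf_mx_cons !mxE !big_ord_recl !big_ord0 !mxE /= !mul1r !mul0r !addr0.
have -> : lift ord0 ord0 = 1 :> 'I_2 by apply: val_inj.
by have -> : ord0 = 0 :> 'I_2 by apply: val_inj.
Qed.

Lemma pos_seq_rev s : pos_seq s -> pos_seq (rev s).
Proof. by rewrite /pos_seq -!size_eq0 size_rev all_rev. Qed.

Lemma pos_seq_cat s t : pos_seq s -> pos_seq t -> pos_seq (s ++ t).
Proof.
rewrite /pos_seq -!size_eq0 size_cat addn_eq0 all_cat => /andP[s0 ->] /andP[_ ->].
by rewrite (negbTE s0).
Qed.

Lemma cf_mx_pos s : pos_seq s ->
  [/\ 0 < cf_mx s 0 0, 0 < cf_mx s 1 0 & cf s = cf_mx s 0 0 / cf_mx s 1 0].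
Proof.
rewrite /pos_seq; elim: s => [|c t IH] // /andP[_ /andP[c_gt0 t_pos]].
have [-> ->] := cf_mx_cons_col c t.
case: t IH t_pos => [_ _ | c' t IH t_pos].
  by rewrite /cf_mx big_nil !mxE /= mulr1 addr0 divr1 ltr0n.
have [p_gt0 q_gt0 cf_t] := IH t_pos.
rewrite -[cf _]/(c%:R + (cf (c' :: t))^-1) cf_t.
split=> //; first by rewrite ltr_wpDl // mulr_ge0 // ltW.
by rewrite invf_div; field; rewrite gt_eqF.
Qed.

Lemma m_palindrome_mxE m s :
  pos_seq s -> m_palindrome m s <-> cf_mx s 0 1 = m%:R * cf_mx s 1 0.
Proof.
rewrite /m_palindrome => s_pos; have [p_gt0 q_gt0 ->] := cf_mx_pos s_pos.
have := cf_mx_pos (pos_seq_rev s_pos); rewrite cf_mx_rev !mxE => -[_ p'_gt0 ->].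
rewrite mulrA; apply: (iff_trans (rwP eqP)).
rewrite eqr_div ?lt0r_neq0 // mulrC mulrAC.
by split=> [/eqP/(mulIf (lt0r_neq0 p_gt0)) | ->].
Qed.

Theorem lemma3p9 (m : nat) (A B : seq nat) :
  pos_seq A -> pos_seq B ->
  m_palindrome m A -> m_palindrome m B ->
  m_palindrome m (A ++ B ++ A).
Proof.
move=> A_pos B_pos; have ABA_pos := pos_seq_cat A_pos (pos_seq_cat B_pos A_pos).
rewrite !m_palindrome_mxE // -!twisted_sym2P !cf_mx_cat mulmxA.
exact: mulmx_sandwich_twisted_sym.
Qed.
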